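(* Let $M=(S,\Sigma,\delta,s_0,F)$ be a deterministic finite automaton, let $T\ge 1$ be an integer, and for each $s\in S$ let $P(\cdot\mid s)$ and $Q(\cdot\mid s)$ be probability distributions on $\Sigma$. Define probability distributions $P$ and $Q$ on $\Sigma^T$ by $P(x)=\prod_{t=1}^T P(\sigma_t\mid s_t)$ and $Q(x)=\prod_{t=1}^T Q(\sigma_t\mid s_t)$ for $x=\sigma_1\cdots\sigma_T$, where $s_1\cdots s_{T+1}$ is the state sequence induced by $x$. Let $\epsilon=\max_{s\in S}\mathrm{TV}(P(\sigma\mid s),Q(\sigma\mid s))$. Then $$\mathrm{TV}(P(x),Q(x))\le 2T|S|^{T+1}\epsilon.$$
   Context: A deterministic finite automaton $M=(S,\Sigma,\delta,s_0,F)$ has a finite state set $S$, a finite alphabet $\Sigma$, a transition function $\delta:S\times\Sigma\to S$, an initial state $s_0\in S$ and a set of final states $F\subseteq S$. For a string $x=\sigma_1\cdots\sigma_T\in\Sigma^T$, the induced state sequence $s_1\cdots s_{T+1}$ is given by $s_1=s_0$ and $s_{t+1}=\delta(s_t,\sigma_t)$ for $1\le t\le T$. The total variation distance between discrete distributions is defined without the factor $1/2$: $\mathrm{TV}(\mu,\nu)=\sum_a|\mu(a)-\nu(a)|$. *)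

From HB Require Import structures.
From mathcomp Require Import all_boot all_order all_algebra.
Set Implicit Arguments. Unset Strict Implicit. Unset Printing Implicit Defensive.
Import Order.TTheory GRing.Theory Num.Theory.
Local Open Scope ring_scope.

Record DFA (S Sigma : finType) := mkDFA {
  dfa_delta : S -> Sigma -> S;
  dfa_init  : S;
  dfa_final : {set S} }.

(* State s_{t+1} (1-indexed in the paper), i.e. the state reached after
   reading the first t letters of x (t is 0-indexed here). *)
Definition state_at (S Sigma : finType) (M : DFA S Sigma) (x : seq Sigma)
  (t : nat) : S := foldl (dfa_delta M) (dfa_init M) (take t x).

Definition is_distr (R : numDomainType) (A : finType) (p : A -> R) : Prop :=
  (forall a, 0 <= p a) /\ \sum_(a : A) p a = 1.

(* TV without the factor 1/2. *)
Definition TV (R : numDomainType) (A : finType) (p q : A -> R) : R :=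
  \sum_(a : A) `|p a - q a|.

Definition string_prob (R : numDomainType) (S Sigma : finType)
  (M : DFA S Sigma) (T : nat) (P : S -> Sigma -> R) (x : T.-tuple Sigma) : R :=
  \prod_(t < T) P (state_at M x t) (tnth x t).

From HB Require Import structures.
From mathcomp Require Import all_boot all_order all_algebra.
Import Order.TTheory GRing.Theory Num.Theory.
Local Open Scope ring_scope.

(* Splitting off the first letter, |P(a)P'(x) - Q(a)Q'(x)| is at most
   |P(a) - Q(a)| P'(x) + Q(a) |P'(x) - Q'(x)|, where P', Q' are the string
   distributions of the remaining letters from the next state.  Summing and
   inducting on T gives TV(P, Q) <= T eps, which already implies the stated
   bound because |S| >= 1. *)

Lemma big_tuple_cons (R : nmodType) (A : finType) n (F : n.+1.-tuple A -> R) :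
  \sum_(x : n.+1.-tuple A) F x = \sum_(a : A) \sum_(x : n.-tuple A) F [tuple of a :: x].
Proof.
rewrite pair_big /= (reindex (fun p : A * n.-tuple A => [tuple of p.1 :: p.2])) //=.
exists (fun x : n.+1.-tuple A => (thead x, [tuple of behead x])).
  by move=> [a x] _; congr pair; apply: val_inj.
by move=> [[|b l] //= x] _; apply: val_inj.
Qed.

Lemma norm_mulB_le (R : numDomainType) (p q u v : R) :
  0 <= q -> 0 <= u -> `|p * u - q * v| <= `|p - q| * u + q * `|u - v|.
Proof.
move=> q0 u0; have -> : p * u - q * v = (p - q) * u + q * (u - v).
  by rewrite mulrBl mulrBr addrA subrK.
by apply: le_trans (ler_normD _ _) _; rewrite !normrM (ger0_norm u0) (ger0_norm q0).
Qed.

Section RunProb.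
Context {R : numDomainType} {S Sigma : finType} (d : S -> Sigma -> S).
Context {P Q : S -> Sigma -> R}.
Hypotheses (P_distr : forall s, is_distr (P s)) (Q_distr : forall s, is_distr (Q s)).

Definition run_prob (K : S -> Sigma -> R) {n} (s : S) (x : n.-tuple Sigma) : R :=
  \prod_(t < n) K (foldl d s (take t x)) (tnth x t).

Lemma run_prob_cons K n s a (x : n.-tuple Sigma) :
  run_prob K s [tuple of a :: x] = K s a * run_prob K (d s a) x.
Proof.
rewrite /run_prob big_ord_recl; congr (_ * _).
by apply: eq_bigr => i _; rewrite !(tnth_nth a).
Qed.

Lemma run_prob_ge0 K n s (x : n.-tuple Sigma) :
  (forall s, is_distr (K s)) -> 0 <= run_prob K s x.
Proof.
by move=> K_distr; apply: prodr_ge0 => t _; case: (K_distr (foldl d s (take t x))).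
Qed.

Lemma run_prob_sum1 K n s :
  (forall s, is_distr (K s)) -> \sum_(x : n.-tuple Sigma) run_prob K s x = 1.
Proof.
move=> K_distr; elim: n s => [|n IHn] s.
  rewrite (eq_bigr (fun=> 1)) ?sumr_const ?card_tuple // => x _.
  by rewrite /run_prob big_ord0.
rewrite big_tuple_cons.
under eq_bigr => a _ do under eq_bigr => x _ do rewrite run_prob_cons.
under eq_bigr => a _ do rewrite -mulr_sumr IHn mulr1.
by case: (K_distr s).
Qed.

Lemma TV_run_prob_le {e : R} n s : (forall s, TV (P s) (Q s) <= e) ->
  TV (@run_prob P n s) (@run_prob Q n s) <= n%:R * e.
Proof.
move=> TV_le; elim: n s => [|n IHn] s.
  by rewrite mul0r /TV big1 // => x; rewrite /run_prob !big_ord0 subrr normr0.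
have [Q_ge0 Q_sum1] := Q_distr s.
rewrite /TV big_tuple_cons.
under eq_bigr => a _ do under eq_bigr => x _ do rewrite !run_prob_cons.
have step a : \sum_(x : n.-tuple Sigma)
    `|P s a * run_prob P (d s a) x - Q s a * run_prob Q (d s a) x|
  <= `|P s a - Q s a| + Q s a * (n%:R * e).
  apply: le_trans (_ : \sum_x (`|P s a - Q s a| * run_prob P (d s a) x
      + Q s a * `|run_prob P (d s a) x - run_prob Q (d s a) x|) <= _).
    by apply: ler_sum => x _; apply: norm_mulB_le; rewrite ?run_prob_ge0.
  rewrite big_split /= -!mulr_sumr run_prob_sum1 // mulr1 lerD2l.
  exact: ler_wpM2l (IHn _).
apply: le_trans (ler_sum _ (fun a _ => step a)) _.
rewrite big_split /= -mulr_suml Q_sum1 mul1r mulrSr mulrDl mul1r addrC lerD2l.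
exact: TV_le.
Qed.

End RunProb.

Lemma string_probE (R : numDomainType) (S Sigma : finType) (M : DFA S Sigma) T
    (K : S -> Sigma -> R) :
  @string_prob R S Sigma M T K = @run_prob R S Sigma (dfa_delta M) K T (dfa_init M).
Proof. by []. Qed.

Theorem lemma4p2 (R : realFieldType) (S Sigma : finType) (M : DFA S Sigma)
  (T : nat) (P Q : S -> Sigma -> R) :
  (1 <= T)%N ->
  (forall s, is_distr (P s)) ->
  (forall s, is_distr (Q s)) ->
  TV (@string_prob R S Sigma M T P) (@string_prob R S Sigma M T Q)
    <= 2 * T%:R * (#|S|%:R) ^+ T.+1 * \big[Num.max/0]_(s : S) TV (P s) (Q s).
Proof.
move=> _ P_distr Q_distr.
set e := \big[Num.max/0]_(s : S) TV (P s) (Q s).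
have TV_le_e s : TV (P s) (Q s) <= e by apply: le_bigmax.
have e_ge0 : 0 <= e by apply: le_trans (TV_le_e (dfa_init M)); apply: sumr_ge0.
have cardS_pow_ge1 : 1 <= (#|S|%:R : R) ^+ T.+1.
  by apply: exprn_ege1; rewrite ler1n; apply/card_gt0P; exists (dfa_init M).
rewrite !string_probE.
apply: le_trans (TV_run_prob_le (dfa_delta M) P_distr Q_distr T (dfa_init M) TV_le_e) _.
rewrite ler_wpM2r // -[leLHS]mulr1 ler_pM ?mulr_ge0 //.
by rewrite -[leLHS]mul1r ler_wpM2r // ler1n.
Qed.
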